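(* Let $A$ be a simple marked arrangement of $n$ pseudolines, drawn as a wiring diagram, and let $m,k,u,m',k',u'$ be nonnegative integers with $k \leq m$ and $k \leq n-u$. Then \[|\Gamma(m,k,u,m',k',u')| \leq \binom{n-u}{k}\left(\frac{m}{n-u}\right)^k 2^{n-k-u}.\] Symmetrically, if $k' \leq m'$ and $k' \leq n-u'$, then \[|\Gamma(m,k,u,m',k',u')| \leq \binom{n-u'}{k'}\left(\frac{m'}{n-u'}\right)^{k'} 2^{n-k'-u'}.\]
   Context: An arrangement of pseudolines is a finite set of simple curves in the plane, each extending to infinity in both directions, every two intersecting in exactly one point where they cross; simple means no three share a point; marked means an unbounded cell is distinguished as the north-cell, and the south-cell is the cell on the opposite side of every pseudoline. The arrangement is drawn as a wiring diagram: the pseudolines lie on $n$ horizontal wires except near crossings, where two pseudolines on neighboring wires swap wires; the north-cell is the cell above all wires and the south-cell the cell below all wires. A cutpath is a directed path from the north-cell to the south-cell in the dual graph (vertices are cells, edges correspond to shared pseudoline edges, oriented from north side to south side); equivalently, a cutpath moves from cell to cell, each time leaving the current cell by crossing one of the pseudolines bounding it from below. For a cell $c$, let $d$ be the number of edges bounding it from below (''exits''), labelled $1,\dots,d$ from left to right. If $d=1$ the single exit is the unique exit of $c$; if $d\geq 2$, exit $1$ is the left exit, exit $d$ the right exit, and exits $2,\dots,d-1$ are middle exits. The reversed view of a cutpath is obtained by rotating the plane by $180$ degrees (so the south-cell becomes the top cell) and reading the cutpath from the south-cell to the north-cell, with exits defined in the same way in the rotated picture. $\Gamma(m,k,u,m',k',u')$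 is the set of cutpaths of $A$ such that, viewed from the north-cell to the south-cell, the number of middle exits taken is $k$, the number of unique exits taken is $u$, and the total number of middle exits of all visited cells (taken or not) is $m$; and in the reversed view the corresponding numbers are $k'$, $u'$, $m'$. *)

From mathcomp Require Import all_boot all_order all_algebra.
Set Implicit Arguments. Unset Strict Implicit. Unset Printing Implicit Defensive.

(* Wiring diagrams.  A wiring diagram of n pseudolines is a word w : seq nat *)
(* of crossings; crossing number t (0-based) has position i = nth 0 w t     *)
(* (with i < n-1) and swaps the pseudolines currently on wire positions i   *)
(* and i.+1 (positions 0..n-1 counted from the top).  Pseudolines are       *)
(* labelled by their initial wire position.  Columns 0..size w: crossing t  *)
(* lies between column t and column t.+1.                                   *)

Definition swap_at (s : seq nat) (i : nat) : seq nat :=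
  set_nth 0 (set_nth 0 s i (nth 0 s i.+1)) i.+1 (nth 0 s i).

(* which pseudoline is on which wire position just before crossing t *)
Definition wstate (n : nat) (w : seq nat) (t : nat) : seq nat :=
  foldl swap_at (iota 0 n) (take t w).

Definition crosses (n : nat) (w : seq nat) (t p q : nat) : bool :=
  let s := wstate n w t in
  let i := nth 0 w t in
  ((nth 0 s i == p) && (nth 0 s i.+1 == q)) ||
  ((nth 0 s i == q) && (nth 0 s i.+1 == p)).

Definition wiring_diagram (n : nat) (w : seq nat) : bool :=
  all (fun i => i.+1 < n) w &&
  [forall p : 'I_n, forall q : 'I_n,
     (p < q) ==> (count (fun t => crosses n w t p q) (iota 0 (size w)) == 1)].

(* Cells.  Level j (0 <= j <= n) is the strip between wire positions j-1  *)
(* and j (level 0 = above all wires, level n = below all wires).  A       *)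
(* crossing at position i interrupts level i.+1.  A cell is a maximal run *)
(* of columns at a level not interrupted by a crossing; we identify it by *)
(* (level j, first column a).  Level 0 is the north-cell, level n the     *)
(* south-cell.                                                            *)

Definition valid_start (w : seq nat) (j a : nat) : bool :=
  (a == 0) || ((0 < a) && ((nth 0 w a.-1).+1 == j)).

(* last column of the cell starting at column a on level j *)
Definition cell_end (w : seq nat) (j a : nat) : nat :=
  a + find (fun x => x.+1 == j) (drop a w).

Definition overlap (w : seq nat) (j a j' a' : nat) : bool :=
  maxn a a' <= minn (cell_end w j a) (cell_end w j' a').

(* cells of level j' adjacent to cell (j,a), listed left to right *)
Definition adj_cells (w : seq nat) (j a j' : nat) : seq nat :=
  [seq a' <- iota 0 (size w).+1 | valid_start w j' a' && overlap w j a j' a'].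

(* Exit statistics for a cell with exits L (ordered left to right in the  *)
(* current view), when the exit x is taken.                               *)
Definition n_middle (L : seq nat) : nat := size L - 2.
Definition taken_middle (L : seq nat) (x : nat) : bool :=
  (2 <= size L) && (1 < (index x L).+1 < size L).
Definition is_unique (L : seq nat) : bool := size L == 1.

(* Cutpaths: sequences of cells c_0 (north) , ..., c_n (south), c_j on    *)
(* level j, given by its first column, consecutive cells sharing an edge. *)

Definition cp (N n : nat) (p : n.+1.-tuple 'I_N.+1) (j : nat) : nat :=
  nth ord0 p j.

Definition is_cutpath (n : nat) (w : seq nat)
  (p : n.+1.-tuple 'I_(size w).+1) : bool :=
  [forall j : 'I_n.+1, valid_start w j (cp p j)] &&
  [forall j : 'I_n, overlap w j (cp p j) j.+1 (cp p j.+1)].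

(* downward view (north to south): cell c_j, j < n, exits to level j+1 *)
Definition down_exits n w (p : n.+1.-tuple 'I_(size w).+1) (j : nat) :=
  adj_cells w j (cp p j) j.+1.
(* reversed view (rotated by 180 degrees, read south to north): cell c_j,*)
(* 0 < j, exits to level j-1; left-to-right in the rotated picture is    *)
(* right-to-left in the original one.                                    *)
Definition up_exits n w (p : n.+1.-tuple 'I_(size w).+1) (j : nat) :=
  rev (adj_cells w j (cp p j) j.-1).

Definition stat_m n w (p : n.+1.-tuple 'I_(size w).+1) : nat :=
  \sum_(j < n) n_middle (down_exits p j).
Definition stat_k n w (p : n.+1.-tuple 'I_(size w).+1) : nat :=
  \sum_(j < n) taken_middle (down_exits p j) (cp p j.+1).
Definition stat_u n w (p : n.+1.-tuple 'I_(size w).+1) : nat :=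
  \sum_(j < n) is_unique (down_exits p j).

Definition stat_m' n w (p : n.+1.-tuple 'I_(size w).+1) : nat :=
  \sum_(j < n) n_middle (up_exits p j.+1).
Definition stat_k' n w (p : n.+1.-tuple 'I_(size w).+1) : nat :=
  \sum_(j < n) taken_middle (up_exits p j.+1) (cp p j).
Definition stat_u' n w (p : n.+1.-tuple 'I_(size w).+1) : nat :=
  \sum_(j < n) is_unique (up_exits p j.+1).

Definition Gamma (n : nat) (w : seq nat) (m k u m' k' u' : nat) :
  {set n.+1.-tuple 'I_(size w).+1} :=
  [set p | [&& is_cutpath p, stat_m p == m, stat_k p == k, stat_u p == u,
             stat_m' p == m', stat_k' p == k' & stat_u' p == u']].

(* A cutpath is a path of length n in the tree whose children of a cell are its
   exits, so |Gamma| is at most the number of such paths with prescribed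
   statistics (m, k, u).  At a cell with a unique exit, u drops by one.  At a cell with d >= 2
   exits, m drops by mu = d - 2; the two extreme exits keep k and the mu middle
   ones lower it by one.  With N = n - u, the bound
   F(N, k, m) = C(N, k) (m/N)^k 2^(N-k) survives this step because
     2 F(N, k, m - mu) + mu F(N, k - 1, m - mu) <= F(N + 1, k, m),
   which after clearing binomial coefficients is the tangent-line inequality
   y^(k+1) + (k+1) y^k (s - y) <= s^(k+1) at y = (m - mu)/N, s = m/(N + 1).
   The reversed view is the same count along the path read from south to north. *)

From mathcomp Require Import all_boot all_order all_algebra.
From mathcomp Require Import ring lra zify.
Import Order.TTheory GRing.Theory Num.Theory.
Set Implicit Arguments. Unset Strict Implicit. Unset Printing Implicit Defensive.
Local Open Scope ring_scope.

Lemma expr_tangent_le (R : realDomainType) (y s : R) k : 0 <= y -> 0 <= s ->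
  y ^+ k.+1 + k.+1%:R * y ^+ k * (s - y) <= s ^+ k.+1.
Proof.
move=> y_ge0 s_ge0; elim: k => [|k IHk]; first by rewrite !expr1; lra.
have sq_ge0 : 0 <= k.+1%:R * y ^+ k * (s - y) ^+ 2.
  by rewrite mulr_ge0 ?sqr_ge0 // mulr_ge0 ?exprn_ge0.
rewrite [s ^+ k.+2]exprS; apply: (le_trans _ (ler_wpM2l s_ge0 IHk)).
rewrite [y ^+ k.+2]exprS [y ^+ k.+1]exprS.
move: sq_ge0; rewrite -[k.+2]addn1 -[k.+1]addn1 !natrD; nra.
Qed.

Lemma binomial_tangent_le (R : realFieldType) (N k : nat) (y s : R) :
  0 <= y -> 0 <= s ->
  'C(N, k.+1)%:R * y ^+ k.+1 + (N.+1%:R * s - N%:R * y) * ('C(N, k)%:R * y ^+ k)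
    <= 'C(N.+1, k.+1)%:R * s ^+ k.+1.
Proof.
move=> y_ge0 s_ge0; have [ltNk|lekN] := ltnP N k.
  by rewrite !bin_small ?mul0r ?mulr0 ?addr0 //; lia.
have downN : N.+1%:R * 'C(N, k.+1)%:R = (N%:R - k%:R) * 'C(N.+1, k.+1)%:R :> R.
  by rewrite -natrB // -!natrM -[in LHS]/(N.+1.-1) mul_bin_down subSS.
have diagN : N.+1%:R * 'C(N, k)%:R = k.+1%:R * 'C(N.+1, k.+1)%:R :> R.
  by rewrite -!natrM -[in LHS]/(N.+1.-1) mul_bin_diag.
have C_ge0 : 0 <= N.+1%:R * 'C(N.+1, k.+1)%:R :> R by rewrite mulr_ge0.
rewrite -(ler_pM2l (ltr0Sn R N)).
have -> : N.+1%:R * ('C(N, k.+1)%:R * y ^+ k.+1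
            + (N.+1%:R * s - N%:R * y) * ('C(N, k)%:R * y ^+ k)) =
          N.+1%:R * 'C(N.+1, k.+1)%:R * (y ^+ k.+1 + k.+1%:R * y ^+ k * (s - y)).
  transitivity (N.+1%:R * 'C(N, k.+1)%:R * y ^+ k.+1
      + (N.+1%:R * s - N%:R * y) * (N.+1%:R * 'C(N, k)%:R * y ^+ k)); first by ring.
  rewrite downN diagN exprS -[N.+1]addn1 -[k.+1]addn1 !natrD; ring.
by rewrite mulrA ler_wpM2l // expr_tangent_le.
Qed.

Section Bounds.
Variable R : realFieldType.

Definition gamma_bound (N k m : nat) : R :=
  'C(N, k)%:R * (m%:R / N%:R) ^+ k * 2 ^+ (N - k).

Lemma gamma_bound_ge0 N k m : 0 <= gamma_bound N k m.
Proof. by rewrite /gamma_bound !mulr_ge0 ?exprn_ge0 ?divr_ge0. Qed.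

Lemma gamma_bound0 N m m' : gamma_bound N.+1 0 m = 2 * gamma_bound N 0 m'.
Proof. by rewrite /gamma_bound !bin0 !expr0 !mul1r !subn0 exprS. Qed.

Lemma gamma_boundS N k mu m : (mu <= m)%N ->
  2 * gamma_bound N k.+1 (m - mu) + mu%:R * gamma_bound N k (m - mu)
    <= gamma_bound N.+1 k.+1 m.
Proof.
move=> le_mu_m; rewrite /gamma_bound subSS.
case: N => [|N].
  rewrite bin0n !mul0r mulr0 add0r; case: k => [|k]; last by rewrite bin0n !mul0r mulr0.
  by rewrite bin0 bin1 !expr0 !expr1 !mul1r !mulr1 divr1 ler_nat.
set y := (m - mu)%:R / N.+1%:R : R; set s := m%:R / N.+2%:R : R.
have y_ge0 : 0 <= y by rewrite divr_ge0.
have s_ge0 : 0 <= s by rewrite divr_ge0.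
have mu_def : mu%:R = N.+2%:R * s - N.+1%:R * y :> R.
  rewrite /y /s [N.+2%:R * _]mulrC [N.+1%:R * _]mulrC !divfK ?pnatr_eq0 // natrB //.
  ring.
have := binomial_tangent_le N.+1 k y_ge0 s_ge0; rewrite -mu_def => tangent.
have [lekN|ltNk] := leqP k N.
  rewrite subSS subSn // [2 ^+ (N - k).+1]exprS.
  have := ler_wpM2r (exprn_ge0 (N - k) (ler0n R 2)) tangent; lra.
rewrite (_ : N.+1 - k.+1 = N.+1 - k)%N; last lia.
rewrite bin_small // in tangent *.
have := ler_wpM2r (exprn_ge0 (N.+1 - k) (ler0n R 2)) tangent; lra.
Qed.

Definition path_bound (L u k m : nat) : R :=
  if (u <= L)%N then gamma_bound (L - u) k m else 0.

Lemma path_bound_ge0 L u k m : 0 <= path_bound L u k m.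
Proof. by rewrite /path_bound; case: ifP => // _; exact: gamma_bound_ge0. Qed.

Lemma path_bound_le L u k m : path_bound L u k m <= gamma_bound (L - u) k m.
Proof. by rewrite /path_bound; case: ifP => // _; exact: gamma_bound_ge0. Qed.

Lemma path_boundSS L u k m : path_bound L.+1 u.+1 k m = path_bound L u k m.
Proof. by rewrite /path_bound ltnS subSS. Qed.

Lemma path_bound0 L u m m' : 2 * path_bound L u 0 m' <= path_bound L.+1 u 0 m.
Proof.
rewrite /path_bound; have [le_uL|lt_Lu] := leqP u L.
  by rewrite (leqW le_uL) subSn // (gamma_bound0 _ m m').
by rewrite mulr0; case: ifP => _; rewrite ?gamma_bound_ge0.
Qed.

Lemma path_boundS L u k mu m : (mu <= m)%N ->
  2 * path_bound L u k.+1 (m - mu) + mu%:R * path_bound L u k (m - mu)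
    <= path_bound L.+1 u k.+1 m.
Proof.
rewrite /path_bound; have [le_uL|lt_Lu] := leqP u L => le_mu_m.
  by rewrite (leqW le_uL) subSn //; exact: gamma_boundS.
by rewrite !mulr0 addr0; case: ifP => _; rewrite ?gamma_bound_ge0.
Qed.

Definition exit_share (L u k m : nat) (cs : seq nat) (b : nat) : R :=
  let mu := n_middle cs in let t := taken_middle cs b in let nu := is_unique cs in
  if [&& mu <= m, t <= k & nu <= u]%N then path_bound L (u - nu) (k - t) (m - mu)
  else 0.

Lemma sum_exit_share L u k m cs : uniq cs ->
  \sum_(b <- cs) exit_share L u k m cs b <= path_bound L.+1 u k m.
Proof.
move=> cs_uniq; rewrite (big_nth 0%N).
under eq_big_nat => i /andP[_ lt_i] do
  rewrite /exit_share /taken_middle index_uniq //.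
rewrite /n_middle /is_unique; case: (size cs) => [|[|d]].
- by rewrite big_geq ?path_bound_ge0.
- rewrite big_nat1 /=; case: u => [|u]; first exact: path_bound_ge0.
  by rewrite subn1 (_ : 1 - 2 = 0)%N // !subn0 path_boundSS.
rewrite big_nat_recl // big_nat_recr //= !subSS !subn0 ltnn /=.
under eq_big_nat => i /andP[_ lt_id] do rewrite ltnS ltnS lt_id.
rewrite sumr_const_nat subn0 andbT.
have [le_dm|] := leqP d m; last by rewrite /= mul0rn !addr0 path_bound_ge0.
rewrite /= subn0 -mulr_natr; case: k => [|k] /=.
  by rewrite mul0r; have := path_bound0 L u m (m - d); lra.
by rewrite subn1; have := path_boundS L u k le_dm; lra.
Qed.
End Bounds.

Lemma card_le_count (T : finType) (U : eqType) (A : {pred T}) (f : T -> U)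
    (P : pred U) (s : seq U) :
  {in A &, injective f} -> {in A, forall x, (f x \in s) && P (f x)} ->
  (#|A| <= count P s)%N.
Proof.
move=> f_inj f_in; rewrite cardE -(size_map f) -size_filter.
apply: uniq_leq_size.
  by rewrite map_inj_in_uniq ?enum_uniq // => x y; rewrite !mem_enum; exact: f_inj.
move=> y /mapP[x]; rewrite mem_enum => /f_in /andP[fx_s Pfx] ->.
by rewrite mem_filter Pfx.
Qed.

Section ExitPaths.
Variable ch : nat -> nat -> seq nat.

Fixpoint exit_paths (j a L : nat) : seq (seq nat) :=
  if L is L'.+1 then [seq b :: s | b <- ch j a, s <- exit_paths j.+1 b L']
  else [:: [::]].

Fixpoint is_exit_path (j a : nat) (s : seq nat) : bool :=
  if s is b :: s' then (b \in ch j a) && is_exit_path j.+1 b s' else true.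

Fixpoint path_stat (f : seq nat -> nat -> nat) (j a : nat) (s : seq nat) : nat :=
  if s is b :: s' then (f (ch j a) b + path_stat f j.+1 b s')%N else 0%N.

Definition has_stats (m k u j a : nat) (s : seq nat) : bool :=
  [&& path_stat (fun cs _ => n_middle cs) j a s == m,
      path_stat taken_middle j a s == k &
      path_stat (fun cs _ => is_unique cs) j a s == u].

Lemma mem_exit_paths j a s : is_exit_path j a s -> s \in exit_paths j a (size s).
Proof.
elim: s j a => [|b s IHs] j a /=; first by rewrite inE.
by case/andP=> b_ch /IHs s_paths; apply/allpairsPdep; exists b, s.
Qed.

Lemma has_stats_cons m k u j a b s :
  let mu := n_middle (ch j a) in let t := taken_middle (ch j a) b in
  let nu := is_unique (ch j a) in
  has_stats m k u j a (b :: s) =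
  [&& mu <= m, t <= k & nu <= u]%N && has_stats (m - mu) (k - t) (u - nu) j.+1 b s.
Proof.
rewrite /has_stats /=.
apply/and3P/andP => [[/eqP<- /eqP<- /eqP<-]|].
  by rewrite !leq_addr !addKn !eqxx.
case=> /and3P[? ? ?] /and3P[/eqP? /eqP? /eqP?].
by split; apply/eqP; lia.
Qed.

Lemma path_stat_iota f (c : nat -> nat) j L :
  path_stat f j (c j) [seq c i.+1 | i <- iota j L] =
  (\sum_(j <= i < j + L) f (ch i (c i)) (c i.+1))%N.
Proof.
elim: L j => [|L IHL] j /=; first by rewrite addn0 big_geq.
by rewrite IHL [RHS]big_ltn addnS ?addSn // ltnS leq_addr.
Qed.

Lemma is_exit_path_iota (c : nat -> nat) j L :
  (forall i, (j <= i < j + L)%N -> c i.+1 \in ch i (c i)) ->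
  is_exit_path j (c j) [seq c i.+1 | i <- iota j L].
Proof.
elim: L j => [|L IHL] j c_step //=.
rewrite c_step ?leqnn ?addnS ?ltnS ?leq_addr //=; apply: IHL => i /andP[lt_ji lt_iL].
by apply: c_step; rewrite ltnW //= -addSnnS.
Qed.

Section Count.
Variable R : realFieldType.
Hypothesis ch_uniq : forall j a, uniq (ch j a).

Lemma count_exit_paths L m k u j a :
  (count (has_stats m k u j a) (exit_paths j a L))%:R <= path_bound R L u k m.
Proof.
elim: L m k u j a => [|L IHL] m k u j a.
  rewrite /= /has_stats /= addn0.
  case: m k u => [|m] [|k] [|u] //=; rewrite ?path_bound_ge0 //.
  by rewrite /path_bound /gamma_bound bin0 !expr0 !mulr1.
rewrite /= count_flatten sumnE !big_map natr_sum.
apply: (le_trans _ (sum_exit_share R L u k m (ch_uniq j a))); apply: ler_sum => b _.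
rewrite count_map (eq_count (has_stats_cons _ _ _ _ _ b)) /exit_share.
by case: ifP => _; [exact: IHL | rewrite count_pred0].
Qed.

Lemma card_le_path_bound (T : finType) (A : {pred T}) (c : T -> nat -> nat)
    (a n m k u : nat) :
  {in A, forall x, c x 0 = a} ->
  {in A &, forall x y, (forall i, i <= n -> c x i = c y i)%N -> x = y} ->
  {in A, forall x i, i < n -> c x i.+1 \in ch i (c x i)}%N ->
  {in A, forall x, [/\ \sum_(i < n) n_middle (ch i (c x i)) = m,
                      \sum_(i < n) taken_middle (ch i (c x i)) (c x i.+1) = k &
                      \sum_(i < n) is_unique (ch i (c x i)) = u]%N} ->
  #|A|%:R <= path_bound R n u k m.
Proof.
move=> c0 c_inj c_step c_stats.
apply: le_trans (count_exit_paths n m k u 0 a); rewrite ler_nat.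
pose code x := [seq c x i.+1 | i <- iota 0 n].
apply: (@card_le_count _ _ _ code) => [x y xA yA code_xy|x xA].
  apply: c_inj => // -[_|i lt_in]; first by rewrite !c0.
  have := congr1 (nth 0%N ^~ i) code_xy.
  by rewrite !(nth_map 0%N) ?size_iota ?nth_iota.
have size_code : size (code x) = n by rewrite size_map size_iota.
rewrite -(c0 x xA) -[n in exit_paths _ _ n]size_code.
rewrite mem_exit_paths; last first.
  by apply: is_exit_path_iota => i /andP[_ lt_in]; exact: c_step.
have [<- <- <-] := c_stats x xA.
by rewrite /has_stats !path_stat_iota !big_mkord !eqxx.
Qed.

End Count.
End ExitPaths.

Lemma sum_ord_rev n (G : nat -> nat) :
  (\sum_(i < n) G (n - i) = \sum_(i < n) G i.+1)%N.
Proof.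
by rewrite (reindex_inj rev_ord_inj); apply: eq_bigr => i _; rewrite /= subKn.
Qed.

Lemma adj_cells_uniq w j a j' : uniq (adj_cells w j a j').
Proof. by rewrite filter_uniq ?iota_uniq. Qed.

Lemma overlapC w j a j' a' : overlap w j a j' a' = overlap w j' a' j a.
Proof. by rewrite /overlap maxnC minnC. Qed.

Lemma cp_inj n N (p q : n.+1.-tuple 'I_N.+1) :
  (forall j, j <= n -> cp p j = cp q j)%N -> p = q.
Proof.
move=> eq_pq; apply: eq_from_tnth => -[j lt_jn]; apply: val_inj.
by rewrite /= !(tnth_nth ord0); exact: eq_pq.
Qed.

Section Cutpath.
Variables (n : nat) (w : seq nat) (p : n.+1.-tuple 'I_(size w).+1).
Hypothesis p_cut : is_cutpath p.

Lemma cutpath_valid_start j : (j <= n)%N -> valid_start w j (cp p j).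
Proof.
by move=> le_jn; case/andP: p_cut => /forallP/(_ (Ordinal (le_jn : (j < n.+1)%N))).
Qed.

Lemma cutpath_overlap j : (j < n)%N -> overlap w j (cp p j) j.+1 (cp p j.+1).
Proof. by move=> lt_jn; case/andP: p_cut => _ /forallP/(_ (Ordinal lt_jn)). Qed.

Lemma cutpath_north : cp p 0 = 0%N.
Proof. by case/orP: (cutpath_valid_start (leq0n n)) => [/eqP|/andP[]]. Qed.

Lemma cutpath_south : all (fun i => i.+1 < n)%N w -> cp p n = 0%N.
Proof.
move=> /allP w_wires.
case/orP: (cutpath_valid_start (leqnn n)) => [/eqP //|/andP[cp_gt0 /eqP wire_n]].
have lt_size : ((cp p n).-1 < size w)%N by rewrite prednK // -ltnS ltn_ord.
by have := w_wires _ (mem_nth 0%N lt_size); rewrite wire_n ltnn.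
Qed.

Lemma cutpath_down_step j : (j < n)%N -> cp p j.+1 \in adj_cells w j (cp p j) j.+1.
Proof.
move=> lt_jn; rewrite mem_filter mem_iota ltn_ord.
by rewrite cutpath_valid_start ?cutpath_overlap.
Qed.

Lemma cutpath_up_step j : (j < n)%N -> cp p j \in adj_cells w j.+1 (cp p j.+1) j.
Proof.
move=> lt_jn; rewrite mem_filter mem_iota ltn_ord overlapC cutpath_overlap //.
by rewrite cutpath_valid_start // ltnW.
Qed.

End Cutpath.

Section Views.
Variables (R : realFieldType) (n : nat) (w : seq nat) (m k u m' k' u' : nat).

Lemma card_Gamma_down : #|Gamma n w m k u m' k' u'|%:R <= path_bound R n u k m.
Proof.
have ch_uniq j a := adj_cells_uniq w j a j.+1.
apply: (card_le_path_bound R ch_uniq (c := @cp _ n)) => [p|p q|p|p]; rewrite ?inE.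
- by case/andP=> p_cut _; exact: cutpath_north.
- by move=> _ _; exact: cp_inj.
- by case/andP=> p_cut _ i; exact: cutpath_down_step.
by case/and4P=> _ /eqP<- /eqP<- /andP[/eqP<- _].
Qed.

Lemma card_Gamma_up : all (fun i => i.+1 < n)%N w ->
  #|Gamma n w m k u m' k' u'|%:R <= path_bound R n u' k' m'.
Proof.
move=> w_wires.
have ch_uniq i a : uniq (rev (adj_cells w (n - i) a (n - i).-1)).
  by rewrite rev_uniq adj_cells_uniq.
apply: (card_le_path_bound R ch_uniq (c := fun p i => cp p (n - i)))
  => [p|p q|p|p]; rewrite ?inE.
- by case/andP=> p_cut _; rewrite subn0 cutpath_south.
- move=> _ _ eq_pq; apply: cp_inj => j le_jn.
  by have := eq_pq (n - j)%N (leq_subr j n); rewrite subKn.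
- case/andP=> p_cut _ i lt_in; rewrite mem_rev -(subnSK lt_in) /=.
  by apply: cutpath_up_step => //; lia.
case/and4P=> _ _ _ /and4P[_ /eqP<- /eqP<- /eqP<-].
split.
- exact: (sum_ord_rev n (fun j => n_middle (up_exits p j))).
- under eq_bigr do rewrite subnS.
  exact: (sum_ord_rev n (fun j => taken_middle (up_exits p j) (cp p j.-1))).
- exact: (sum_ord_rev n (fun j => is_unique (up_exits p j))).
Qed.
End Views.

Theorem mainTheorem3 (n : nat) (w : seq nat) (m k u m' k' u' : nat) :
  wiring_diagram n w ->
  ((k <= m)%N -> (k <= n - u)%N ->
     (#|Gamma n w m k u m' k' u'|%:R : rat) <=
     'C(n - u, k)%:R * ((m%:R / (n - u)%:R) ^+ k) * 2 ^+ (n - k - u)) /\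
  ((k' <= m')%N -> (k' <= n - u')%N ->
     (#|Gamma n w m k u m' k' u'|%:R : rat) <=
     'C(n - u', k')%:R * ((m'%:R / (n - u')%:R) ^+ k') * 2 ^+ (n - k' - u')).
Proof.
case/andP=> w_wires _; split=> _ _; rewrite subnAC.
  apply: (le_trans _ (path_bound_le rat n u k m)); exact: card_Gamma_down.
apply: (le_trans _ (path_bound_le rat n u' k' m')); exact: card_Gamma_up.
Qed.
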